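(* Let $T\ge 2$ be an integer and $n=T^2$. Consider the family of Adaptive Sampling for Discovery (ASD) problems with unlabeled set $S^n=[n]=\{1,\dots,n\}$, parameter $\theta\in[0,1]^n$, and label distribution $\mathcal{D}_{\theta\mid x}=\mathcal{N}(\theta_x,1)$ for $x\in[n]$ (so $f_\theta(x)=\theta_x$). For any algorithm $\mathcal{A}$ there exists a prior distribution on $\theta\in[0,1]^n$ (i.e. over this family of ASD problems) such that $\mathcal{BR}(T,\mathcal{A})\ge cT$, where $c>0$ is a universal constant.
   Context: Adaptive Sampling for Discovery (ASD): an unknown parameter $\theta$ is drawn from a prior; given input $x$ the label is drawn from $\mathcal{D}_{\theta\mid x}$, and $f_\theta(x)=\mathbb{E}_{Y\sim\mathcal{D}_{\theta\mid x}}[Y]$. Starting from a finite unlabeled set $S^n$, at each step $t=1,\dots,T$ an algorithm chooses (possibly at random, based on the history $\mathcal{F}_t=\{(X_i,Y_i)\}_{i<t}$) a point $X_t\in S^n_t:=S^n\setminus\{X_1,\dots,X_{t-1}\}$ and observes $Y_t\sim\mathcal{D}_{\theta\mid X_t}$; each point can be labeled at most once. The regret is $R_T=\max_{x_1,\dots,x_T\in S^n \text{ distinct}}\sum_{t=1}^T f_\theta(x_t)-\sum_{t=1}^T f_\theta(X_t)$, and the Bayesian regret is $\mathcal{BR}(T,\mathcal{A})=\mathbb{E}[R_T]$, the expectation being over the prior on $\theta$, the labels, and the algorithm's randomness. *)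

From HB Require Import structures.
From mathcomp Require Import all_boot all_order all_algebra.
From mathcomp Require Import all_classical all_reals all_analysis.

Set Implicit Arguments.
Unset Strict Implicit.
Unset Printing Implicit Defensive.

Import Order.TTheory GRing.Theory Num.Theory.
Local Open Scope classical_set_scope.
Local Open Scope ring_scope.

(* A (possibly randomized) algorithm for horizon T: after k steps, given the
   history (X_1..X_k) = xs and (Y_1..Y_k) = ys, it picks X_{k+1} = x with
   probability [policy xs ys x].  It only picks unlabeled points, and the
   choice probabilities are (jointly Borel) measurable functions of the
   observed labels, so that all expectations are well defined. *)
Record algorithm (R : realType) (n T : nat) := Algorithm {
  policy : forall k : nat, k.-tuple 'I_n -> k.-tuple R -> 'I_n -> R;
  policy_ge0 : forall k (xs : k.-tuple 'I_n) ys x, 0 <= policy xs ys x;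
  policy_sum1 : forall k (xs : k.-tuple 'I_n) ys, (k < T)%N ->
    \sum_(x : 'I_n) policy xs ys x = 1;
  policy_unlabeled : forall k (xs : k.-tuple 'I_n) ys x,
    x \in (xs : seq 'I_n) -> policy xs ys x = 0;
  policy_measurable : forall k (xs : k.-tuple 'I_n) x,
    measurable_fun setT (fun ys : k.-tuple R => policy xs ys x)
}.

Section ASD.
Context {R : realType} {n T : nat} (A : algorithm R n T).
Local Open Scope ereal_scope.

Fixpoint exp_reward (theta : 'I_n -> R) (m k : nat)
    (xs : k.-tuple 'I_n) (ys : k.-tuple R) : \bar R :=
  match m with
  | 0 => 0
  | m'.+1 =>
      \sum_(x : 'I_n) (policy A xs ys x)%:E *
        ((theta x)%:E +
         \int[normal_prob (theta x) 1]_y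
            exp_reward theta m' [tuple of rcons xs x] [tuple of rcons ys y])
  end.

Definition expected_reward (theta : 'I_n -> R) : \bar R :=
  exp_reward theta T [tuple] [tuple].

Definition best_reward (theta : 'I_n -> R) : R :=
  (\big[Num.max/0%R]_(s : {ffun 'I_T -> 'I_n} | injectiveb s)
      \sum_(t : 'I_T) theta (s t))%R.

Definition expected_regret (theta : 'I_n -> R) : \bar R :=
  (best_reward theta)%:E - expected_reward theta.

(* Bayesian regret for a (finitely supported) prior given as a list of
   (weight, parameter) pairs. *)
Definition bayes_regret (prior : seq (R * {ffun 'I_n -> R})) : \bar R :=
  \sum_(p <- prior) (p.1)%:E * expected_regret p.2.

End ASD.

Definition is_prior {R : realType} {n : nat}
    (prior : seq (R * {ffun 'I_n -> R})) : Prop :=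
  (forall p, p \in prior -> 0 <= p.1 /\ forall x, 0 <= p.2 x <= 1) /\
  \sum_(p <- prior) p.1 = 1.

From HB Require Import structures.
From mathcomp Require Import all_boot all_order all_algebra.
From mathcomp Require Import all_classical all_reals all_analysis.
From mathcomp Require Import measurable_realfun.
From mathcomp.algebra_tactics Require Import ring.
From mathcomp Require Import zify.

(* Take the uniform prior on theta in {0,1}^n.  Every point the algorithm
   picks is still unlabeled, and flipping theta at that point is a symmetry
   of the prior that does not change the history observed so far; hence each
   pick earns 1/2 on average and the expected reward is T/2.  On the other
   hand, pairing 2T of the n = T^2 points and choosing in each pair a point
   with theta = 1 whenever there is one yields T distinct points worth 3T/4
   on average.  The Bayesian regret is thus at least T/4. *)

Set Implicit Arguments.
Unset Strict Implicit.
Unset Printing Implicit Defensive.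

Import Order.TTheory GRing.Theory Num.Theory.
Local Open Scope ring_scope.

Section BitFlip.
Variable I : finType.
Implicit Types (b : {ffun I -> bool}) (x z : I).

Definition flip x b : {ffun I -> bool} := [ffun z => (z == x) (+) b z].

Lemma flipK x : involutive (flip x).
Proof. by move=> b; apply/ffunP => z; rewrite !ffunE addKb. Qed.

Lemma flip_at x b : flip x b x = ~~ b x.
Proof. by rewrite ffunE eqxx. Qed.

Lemma flip_off x z b : z != x -> flip x b z = b z.
Proof. by rewrite ffunE => /negbTE ->. Qed.

Lemma big_fiber_flip (V : nmodType) (F : {ffun I -> bool} -> V) x v :
  (forall b, F (flip x b) = F b) ->
  \sum_(b : {ffun I -> bool} | b x == v) F b =
  \sum_(b : {ffun I -> bool} | b x == ~~ v) F b.
Proof.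
move=> Finv; rewrite (reindex_inj (inv_inj (flipK x))) /=.
by apply: eq_big => [b|b _]; rewrite ?flip_at ?Finv // -eqb_negLR.
Qed.

Lemma sum_fiber_flip (V : nmodType) (F : {ffun I -> bool} -> V) x v :
  (forall b, F (flip x b) = F b) ->
  \sum_(b : {ffun I -> bool}) F b = (\sum_(b : {ffun I -> bool} | b x == v) F b) *+ 2.
Proof.
move=> Finv; rewrite (bigID (fun b => b x == v)) /= mulr2n.
rewrite (big_fiber_flip v Finv); congr (_ + _).
by apply: eq_bigl => b; case: v; case: (b x).
Qed.

Lemma sum_bit_mul (R : numFieldType) (F : {ffun I -> bool} -> R) x :
  (forall b, F (flip x b) = F b) ->
  \sum_(b : {ffun I -> bool}) (b x)%:R * F b = (\sum_(b : {ffun I -> bool}) F b) / 2.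
Proof.
move=> Finv; rewrite (sum_fiber_flip true Finv) -[X in X / 2]mulr_natr.
rewrite mulfK ?pnatr_eq0 //.
by rewrite [RHS]big_mkcond; apply: eq_bigr => b _; case: (b x); rewrite ?mul1r ?mul0r.
Qed.

Lemma sum_bit (R : numFieldType) x :
  \sum_(b : {ffun I -> bool}) (b x)%:R = #|{ffun I -> bool}|%:R / 2 :> R.
Proof.
rewrite (eq_bigr (fun b => (b x)%:R * 1)) => [|b _]; last by rewrite mulr1.
by rewrite (sum_bit_mul (F := fun=> 1)) // sumr_const.
Qed.

Lemma sum_bit_or (R : numFieldType) x z : z != x ->
  \sum_(b : {ffun I -> bool}) (b x || b z)%:R = #|{ffun I -> bool}|%:R * 3 / 4 :> R.
Proof.
move=> zx; pose N : R := #|{ffun I -> bool}|%:R.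
have -> : \sum_(b : {ffun I -> bool}) (b x || b z)%:R =
    \sum_(b : {ffun I -> bool}) ((b x)%:R + (b z)%:R * (~~ b x)%:R) :> R.
  apply: eq_bigr => b _; case: (b x); case: (b z);
  by rewrite /= ?mulr0 ?mul0r ?mulr1 ?addr0 ?add0r.
rewrite big_split /= sum_bit_mul; last by move=> b; rewrite flip_off // eq_sym.
rewrite [X in X / 2](eq_bigr (fun b => 1 - (b x)%:R)); last first.
  by move=> b _; case: (b x); rewrite /= ?subr0 ?subrr.
by rewrite sumrB sumr_const !sum_bit -/N; field.
Qed.

End BitFlip.

Lemma measurable_rcons_tuple d (X : measurableType d) k :
  measurable_fun [set: k.-tuple X * X]
    (fun p : k.-tuple X * X => [tuple of rcons p.1 p.2]).
Proof.
apply/measurable_fun_tnthP => i; have [ik|] := ltnP i k.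
  have -> : @tnth k.+1 X ^~ i \o (fun p : k.-tuple X * X => [tuple of rcons p.1 p.2])
      = @tnth k X ^~ (Ordinal ik) \o fst.
    apply/funext => -[xs x] /=.
    by rewrite !(tnth_nth x) /= nth_rcons size_tuple ik.
  exact: measurableT_comp (measurable_tnth _) measurable_fst.
move=> ki; have ik : i = k :> nat by apply/eqP; rewrite eqn_leq ki -ltnS ltn_ord.
have -> : @tnth k.+1 X ^~ i \o (fun p : k.-tuple X * X => [tuple of rcons p.1 p.2]) = snd.
  apply/funext => -[xs x] /=.
  by rewrite (tnth_nth x) /= nth_rcons size_tuple ik ltnn eqxx.
exact: measurable_snd.
Qed.

Lemma eq_half_EFin (R : numFieldType) (s : \bar R) (c : R) :
  (s *+ 2 = c%:E)%E -> s = (c / 2)%:E.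
Proof. by rewrite mulr2n; case: s => [r [<-]||] //; congr EFin; field. Qed.

Definition bool_param (R : nzSemiRingType) (I : finType) (b : {ffun I -> bool}) :
  {ffun I -> R} := [ffun x => (b x)%:R].

Lemma bool_param_ge0 (R : numDomainType) (I : finType) (b : {ffun I -> bool}) x :
  0 <= bool_param R b x.
Proof. by rewrite ffunE ler0n. Qed.

Section ExpectedReward.
Variables (R : realType) (n T : nat) (A : algorithm R n T).
Local Open Scope ereal_scope.
Implicit Types (theta : 'I_n -> R) (x : 'I_n).

Lemma exp_rewardS theta m k (xs : k.-tuple 'I_n) ys :
  exp_reward A theta m.+1 xs ys =
  \sum_(x : 'I_n) (policy A xs ys x)%:E * ((theta x)%:E +
    \int[normal_prob (theta x) 1]_y
      exp_reward A theta m [tuple of rcons xs x] [tuple of rcons ys y]).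
Proof. by []. Qed.

Section NonnegativeParameter.
Variables (theta : 'I_n -> R) (theta_ge0 : forall x, (0 <= theta x)%R).

Lemma exp_reward_ge0 m k (xs : k.-tuple 'I_n) ys : 0 <= exp_reward A theta m xs ys.
Proof.
elim: m k xs ys => [|m IH] k xs ys //; rewrite exp_rewardS.
apply: sume_ge0 => x _; apply: mule_ge0; first by rewrite lee_fin policy_ge0.
by apply: adde_ge0; [rewrite lee_fin | apply: integral_ge0 => y _].
Qed.

Lemma measurable_exp_reward m k (xs : k.-tuple 'I_n) :
  measurable_fun [set: k.-tuple R] (fun ys => exp_reward A theta m xs ys).
Proof.
elim: m k xs => [|m IH] k xs; first exact: measurable_cst.
apply: emeasurable_sum => x; apply: emeasurable_funM.
  by apply/measurable_EFinP; exact: policy_measurable.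
apply: emeasurable_funD; first exact: measurable_cst.
pose f (p : k.-tuple R * R) :=
  exp_reward A theta m [tuple of rcons xs x] [tuple of rcons p.1 p.2].
have mf : measurable_fun setT f.
  exact: measurableT_comp (IH _ [tuple of rcons xs x]) (@measurable_rcons_tuple _ _ k).
have := measurable_fun_fubini_tonelli_F (m2 := normal_prob (theta x) 1) f mf
  (fun p => exp_reward_ge0 _ _ _).
by rewrite /fubini_F.
Qed.

Lemma measurable_exp_reward_rcons m k (xs : k.-tuple 'I_n) (ys : k.-tuple R) x :
  measurable_fun [set: R]
    (fun y => exp_reward A theta m [tuple of rcons xs x] [tuple of rcons ys y]).
Proof.
exact: measurableT_comp (@measurable_exp_reward m _ [tuple of rcons xs x])
  (measurableT_comp (@measurable_rcons_tuple _ _ k) (pair1_measurable ys)).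
Qed.

End NonnegativeParameter.

Lemma eq_exp_reward_unlabeled theta theta' m k (xs : k.-tuple 'I_n) ys :
  (forall x, x \notin (xs : seq 'I_n) -> theta x = theta' x) ->
  exp_reward A theta m xs ys = exp_reward A theta' m xs ys.
Proof.
elim: m k xs ys => [//|m IH] k xs ys eq_theta; rewrite !exp_rewardS.
apply: eq_bigr => x _; have [xs_x|xs'x] := boolP (x \in (xs : seq 'I_n)).
  have -> : policy A xs ys x = 0%R by exact: policy_unlabeled.
  (* Rewriting with [mul0e] in the goal would compare the two integrals by
     conversion, which does not terminate in practice. *)
  have mul0E a b : (0%R)%:E * a = (0%R)%:E * b by rewrite !mul0e.
  exact: mul0E.
rewrite (eq_theta x xs'x); congr (_ * (_ + _)); apply: eq_integral => y _.
apply: IH => z; rewrite mem_rcons in_cons negb_or => /andP[_].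
exact: eq_theta.
Qed.

End ExpectedReward.

Section AveragedReward.
Variables (R : realType) (n T : nat) (A : algorithm R n T).
Local Notation N := (#|{ffun 'I_n -> bool}|%:R : R).
Local Open Scope ereal_scope.

Lemma exp_reward_flip_labeled m k (xs : k.-tuple 'I_n) ys x b :
  x \in (xs : seq 'I_n) ->
  exp_reward A (bool_param R (flip x b)) m xs ys = exp_reward A (bool_param R b) m xs ys.
Proof.
move=> xs_x; apply: eq_exp_reward_unlabeled => z xs'z.
by rewrite ffunE flip_off ?ffunE //; apply: contraNneq xs'z => ->.
Qed.

Lemma sum_integral_exp_reward m k (xs : k.-tuple 'I_n) (ys : k.-tuple R) x c :
  (forall y, \sum_(b : {ffun 'I_n -> bool})
     exp_reward A (bool_param R b) m [tuple of rcons xs x] [tuple of rcons ys y]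
   = c%:E) ->
  \sum_(b : {ffun 'I_n -> bool}) \int[normal_prob (bool_param R b x) 1]_y
     exp_reward A (bool_param R b) m [tuple of rcons xs x] [tuple of rcons ys y] = c%:E.
Proof.
pose E (b : {ffun 'I_n -> bool}) y :=
  exp_reward A (bool_param R b) m [tuple of rcons xs x] [tuple of rcons ys y].
move=> sumE; have fiber v : \sum_(b : {ffun 'I_n -> bool} | b x == v)
    \int[normal_prob (bool_param R b x) 1]_y E b y = (c / 2)%:E.
  rewrite (eq_bigr (fun b => \int[normal_prob v%:R 1]_y E b y)) => [|b /eqP <-];
    last by rewrite ffunE.
  rewrite -big_filter -ge0_integral_sum //; first last.
  - by move=> b y _; apply: exp_reward_ge0; exact: bool_param_ge0.
  - by move=> b; apply: measurable_exp_reward_rcons; exact: bool_param_ge0.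
  rewrite (eq_integral (cst (c / 2)%:E)) => [|y _]; last first.
    rewrite big_filter; apply: eq_half_EFin.
    rewrite -(sumE y) (@sum_fiber_flip _ _ (E^~ y) x v) //.
    by move=> b; apply: exp_reward_flip_labeled; rewrite mem_rcons mem_head.
  by rewrite integral_cst // [X in _ * X]probability_setT mule1.
rewrite (partition_big (fun b : {ffun 'I_n -> bool} => b x) xpredT) // big_bool /=.
by rewrite !fiber -EFinD -splitr.
Qed.

Lemma sum_exp_reward m k (xs : k.-tuple 'I_n) ys : (k + m <= T)%N ->
  \sum_(b : {ffun 'I_n -> bool}) exp_reward A (bool_param R b) m xs ys
  = (N * m%:R / 2)%:E.
Proof.
elim: m k xs ys => [|m IH] k xs ys km; first by rewrite big1 // mulr0 mul0r.
have kT : (k < T)%N by rewrite (leq_trans _ km) // addnS ltnS leq_addr.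
under eq_bigr do rewrite exp_rewardS.
rewrite exchange_big /=.
have reward_x x : \sum_(b : {ffun 'I_n -> bool}) ((bool_param R b x)%:E +
    \int[normal_prob (bool_param R b x) 1]_y
      exp_reward A (bool_param R b) m [tuple of rcons xs x] [tuple of rcons ys y])
    = (N * m.+1%:R / 2)%:E.
  rewrite big_split /= sumEFin (sum_integral_exp_reward (c := N * m%:R / 2)).
    under eq_bigr do rewrite ffunE.
    by rewrite sum_bit -EFinD; congr EFin; rewrite -addn1 natrD; field.
  by move=> y; apply: IH; rewrite addSnnS.
transitivity (\sum_(x : 'I_n) (policy A xs ys x)%:E * (N * m.+1%:R / 2)%:E).
  apply: eq_bigr => x _; rewrite -(reward_x x) ge0_sume_distrr // => b _.
  apply: adde_ge0; first by rewrite lee_fin bool_param_ge0.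
  by apply: integral_ge0 => y _; apply: exp_reward_ge0; exact: bool_param_ge0.
rewrite -ge0_sume_distrl; last by move=> x _; rewrite lee_fin policy_ge0.
by rewrite sumEFin policy_sum1 // mul1e.
Qed.

End AveragedReward.

Section PairedPoints.
Variables (R : realType) (n T : nat).
Hypothesis two_T_le_n : (2 * T <= n)%N.
Local Notation N := (#|{ffun 'I_n -> bool}|%:R : R).

Lemma left_point_subproof (j : 'I_T) : (2 * j < n)%N.
Proof. have := ltn_ord j; lia. Qed.

Lemma right_point_subproof (j : 'I_T) : ((2 * j).+1 < n)%N.
Proof. have := ltn_ord j; lia. Qed.

Definition left_point (j : 'I_T) : 'I_n := Ordinal (left_point_subproof j).
Definition right_point (j : 'I_T) : 'I_n := Ordinal (right_point_subproof j).

Lemma best_reward_ge_pairs (b : {ffun 'I_n -> bool}) :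
  \sum_(j < T) (b (left_point j) || b (right_point j))%:R
    <= best_reward (T := T) (bool_param R b).
Proof.
pose s := [ffun j => if b (left_point j) then left_point j else right_point j].
have s_inj : injectiveb s.
  apply/injectiveP => i j; rewrite !ffunE.
  by case: ifP => _; case: ifP => _ /(congr1 val) /= eq_ij; apply/val_inj => /=; lia.
apply: le_trans (le_bigmax_cond _ _ s_inj); rewrite le_eqVlt; apply/orP; left.
apply/eqP; apply: eq_bigr => j _; rewrite !ffunE.
by case: ifP => [->|].
Qed.

Lemma sum_best_reward :
  N * 3 / 4 * T%:R
  <= \sum_(b : {ffun 'I_n -> bool}) best_reward (T := T) (bool_param R b).
Proof.
apply: le_trans (ler_sum _ (fun b _ => best_reward_ge_pairs b)).
rewrite exchange_big /= (eq_bigr (fun=> N * 3 / 4)) => [|j _]; last first.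
  by apply: sum_bit_or; rewrite -(inj_eq val_inj) /= neq_ltn ltnSn orbT.
by rewrite sumr_const card_ord mulr_natr.
Qed.

End PairedPoints.

Section UniformPrior.
Variables (R : realType) (n : nat).
Local Notation N := (#|{ffun 'I_n -> bool}|%:R : R).

Lemma card_bool_ffun_gt0 : 0 < N.
Proof. by rewrite ltr0n card_ffun card_bool expn_gt0. Qed.

Definition uniform_prior : seq (R * {ffun 'I_n -> R}) :=
  [seq (N^-1, bool_param R b) | b <- index_enum {ffun 'I_n -> bool}].

Lemma is_prior_uniform : is_prior uniform_prior.
Proof.
split=> [_ /mapP[b _ ->]|]; last first.
  by rewrite big_map sumr_const -(mulr_natr N^-1) mulVf // gt_eqF // card_bool_ffun_gt0.
split=> [|x]; first by rewrite invr_ge0 ltW // card_bool_ffun_gt0.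
by rewrite ffunE; case: (b x); rewrite ?lexx ?ler01.
Qed.

Lemma expected_reward_fin_num T (A : algorithm R n T) (b : {ffun 'I_n -> bool}) :
  expected_reward A (bool_param R b) \is a fin_num.
Proof.
have /sum_fin_numP fin_b : (\sum_(b : {ffun 'I_n -> bool})
    exp_reward A (bool_param R b) T [tuple] [tuple] \is a fin_num)%E.
  by rewrite (@sum_exp_reward _ _ _ A T 0 [tuple] [tuple] (leqnn T)).
exact: fin_b (mem_index_enum b) isT.
Qed.

Lemma bayes_regret_uniform T (A : algorithm R n T) :
  bayes_regret A uniform_prior =
  (N^-1 * (\sum_(b : {ffun 'I_n -> bool}) best_reward (T := T) (bool_param R b)
           - N * T%:R / 2))%:E.
Proof.
rewrite /bayes_regret big_map.
transitivity (\sum_(b : {ffun 'I_n -> bool})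
  (N^-1 * (best_reward (T := T) (bool_param R b)
           - fine (expected_reward A (bool_param R b))))%:E)%E.
  by apply: eq_bigr => b _; rewrite EFinM EFinB fineK // expected_reward_fin_num.
rewrite sumEFin -big_distrr sumrB sum_fine => [|b _]; last exact: expected_reward_fin_num.
by rewrite /expected_reward (@sum_exp_reward _ _ _ A T 0 [tuple] [tuple] (leqnn T)).
Qed.

End UniformPrior.

Theorem proposition1 (R : realType) :
  exists c : R, 0 < c /\
  forall T : nat, (2 <= T)%N ->
  forall A : algorithm R (T ^ 2) T,
  exists prior : seq (R * {ffun 'I_(T ^ 2) -> R}),
    is_prior prior /\ ((c * T%:R)%:E <= bayes_regret A prior)%E.
Proof.
exists (1 / 4); split=> [|T T_ge2 A]; first by rewrite divr_gt0.
exists (uniform_prior R (T ^ 2)); split; first exact: is_prior_uniform.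
have two_T_le_n : (2 * T <= T ^ 2)%N by rewrite -mulnn leq_mul2r T_ge2 orbT.
have S_ge := sum_best_reward R two_T_le_n.
have N_gt0 := card_bool_ffun_gt0 R (T ^ 2).
rewrite bayes_regret_uniform lee_fin.
set N := (#|_|%:R : R) in S_ge N_gt0 *; set S := (\sum_b _)%R in S_ge *.
rewrite -subr_ge0 (_ : _ - _ = N^-1 * (S - N * 3 / 4 * T%:R)).
  by apply: mulr_ge0; [rewrite invr_ge0 ltW | rewrite subr_ge0].
by field; rewrite gt_eqF.
Qed.
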